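(* Let $\mathcal R$ be a left-linear TRS and $s,t,u$ terms. (1) If $t\leftarrow_{\mathcal R}s\to_{\mathcal R}u$ then there is a term $v$ with $t\,\nabla_s\,v$ and $v\,\nabla_s\,u$. (2) If $t\leftarrow_{\mathcal R}s\leftrightarrow_{\mathcal B}u$ then there is a term $v$ with $t\,\nabla_s\,v$ and $v\,\tilde\nabla_s\,u$.
   Context: Terms are built from a signature $\mathcal F$ and variables $\mathcal V$. A rule $\ell\to r$ is a pair of terms with $\ell\notin\mathcal V$ and $\mathrm{Var}(r)\subseteq\mathrm{Var}(\ell)$; a TRS is a set of rules, an ES a set of equations; a TRS is left-linear if no left-hand side contains a variable twice. For a set $\mathcal E$ of pairs of terms, $s\to_{\mathcal E}t$ iff $s|_p=\ell\sigma$ and $t=s[r\sigma]_p$ for some $(\ell,r)\in\mathcal E$, position $p$ and substitution $\sigma$; $\leftarrow_{\mathcal E}$ is its inverse and $\leftrightarrow_{\mathcal E}$ its symmetric closure. $\mathcal B$ is a fixed ES with $\mathrm{Var}(\ell)=\mathrm{Var}(r)$ for all $\ell\approx r\in\mathcal B$; $\sim_{\mathcal B}=\leftrightarrow^*_{\mathcal B}$ and $\mathcal B^\pm=\mathcal B\cup\{t\approx s\mid s\approx t\in\mathcal B\}$. For a TRS $\mathcal R$: $\downarrow_{\mathcal R}=\to^*_{\mathcal R}\cdot\leftarrow^*_{\mathcal R}$ and $s\downarrow^\sim_{\mathcal R}t$ iff $s\to^*_{\mathcal R}\cdot\sim_{\mathcal B}\cdot\leftarrow^*_{\mathcal R}t$.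 Critical pairs: for sets of oriented pairs $\mathcal R_1,\mathcal R_2$ (equations of $\mathcal B^\pm$ read as oriented pairs), an overlap is $\langle\ell_1\to r_1,p,\ell_2\to r_2\rangle$ with $\ell_i\to r_i$ variants of elements of $\mathcal R_i$ without common variables, $p$ a non-variable position of $\ell_2$, $\ell_1$ and $\ell_2|_p$ unifiable, and the two rules not variants of each other if $p=\epsilon$. With an mgu $\sigma$ this yields the critical peak $\ell_2\sigma[r_1\sigma]_p\leftarrow^p\ell_2\sigma\to^\epsilon r_2\sigma$ and critical pair $\ell_2\sigma[r_1\sigma]_p\approx r_2\sigma$. A critical peak $t\leftarrow^p s\to^\epsilon u$ is prime if all proper subterms of $s|_p$ are normal forms of $\to_{\mathcal R}$ (irreducibility is always checked w.r.t. $\mathcal R$, also for overlaps involving $\mathcal B^\pm$). $\mathrm{PCP}(\mathcal R)$ is the set of prime critical pairs from overlaps of $\mathcal R$ with itself; $\mathrm{PCP}^\pm(\mathcal R,\mathcal B^\pm)$ is the set of prime critical pairs from overlaps $\langle\rho_1,p,\rho_2\rangle$ with $\rho_1\in\mathcal R,\rho_2\in\mathcal B^\pm$ or $\rho_1\in\mathcal B^\pm,\rho_2\in\mathcal R$. Triangle notation: $t\,\nabla_s\,u$ iff $s\to^+_{\mathcal R}t$, $s\to^+_{\mathcal R}u$, and ($t\downarrow_{\mathcal R}u$ or $t\leftrightarrow_{\mathrm{PCP}(\mathcal R)}u$). $t\,\tilde\nabla_s\,u$ iff $s\to^+_{\mathcal R}t$, $s\sim_{\mathcal B}u$, and ($t\downarrow^\sim_{\mathcal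 R}u$ or $t\leftrightarrow_{\mathrm{PCP}^\pm(\mathcal R,\mathcal B^\pm)}u$). *)

From Stdlib Require Import List Relations.
Import ListNotations.
Set Implicit Arguments.

(* Terms over function symbols F and variables nat (a countably infinite
   variable set). Function symbols are variadic (arity not enforced). *)
Inductive term (F : Type) : Type :=
| Var (x : nat)
| Fun (f : F) (ts : list (term F)).
Arguments Var {F} x.

Section Terms.
Variable F : Type.

Definition sub := nat -> term F.

Fixpoint subst (s : sub) (t : term F) : term F :=
  match t with
  | Var x => s x
  | Fun f ts => Fun f (map (subst s) ts)
  end.

Fixpoint vars (t : term F) : list nat :=
  match t with
  | Var x => [x]
  | Fun _ ts => flat_map vars ts
  end.

Definition pos := list nat.

Fixpoint subt_at (t : term F) (p : pos) : option (term F) :=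
  match p, t with
  | [], _ => Some t
  | i :: q, Fun _ ts =>
      match nth_error ts i with Some ti => subt_at ti q | None => None end
  | _ :: _, Var _ => None
  end.

Fixpoint replace_at (t : term F) (p : pos) (u : term F) : option (term F) :=
  match p, t with
  | [], _ => Some u
  | i :: q, Fun f ts =>
      match nth_error ts i with
      | Some ti =>
          match replace_at ti q u with
          | Some ti' => Some (Fun f (firstn i ts ++ ti' :: skipn (S i) ts))
          | None => None
          end
      | None => None
      end
  | _ :: _, Var _ => None
  end.

Definition pairs := term F -> term F -> Prop.

Definition rstep (E : pairs) (s t : term F) : Prop :=
  exists l r (p : pos) (sg : sub),
    E l r /\ subt_at s p = Some (subst sg l) /\ replace_at s p (subst sg r) = Some t.

Definition sym_step (E : pairs) (s t : term F) : Prop := rstep E s t \/ rstep E t s.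

Definition is_rule (l r : term F) : Prop :=
  (forall x, l <> Var x) /\ incl (vars r) (vars l).

Definition TRS (R : pairs) : Prop := forall l r, R l r -> is_rule l r.

Definition left_linear (R : pairs) : Prop := forall l r, R l r -> NoDup (vars l).

Definition ES_B (B : pairs) : Prop :=
  forall l r, B l r -> forall x, In x (vars l) <-> In x (vars r).

Definition Bpm (B : pairs) : pairs := fun l r => B l r \/ B r l.

Definition B_equiv (B : pairs) : term F -> term F -> Prop :=
  clos_refl_trans _ (sym_step B).

Definition NF (R : pairs) (t : term F) : Prop := ~ exists u, rstep R t u.

Definition joinable (R : pairs) (t u : term F) : Prop :=
  exists v, clos_refl_trans _ (rstep R) t v /\ clos_refl_trans _ (rstep R) u v.

Definition joinable_B (B R : pairs) (t u : term F) : Prop :=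
  exists t' u', clos_refl_trans _ (rstep R) t t' /\ B_equiv B t' u'
    /\ clos_refl_trans _ (rstep R) u u'.

Definition renaming (pi : nat -> nat) : sub := fun x => Var (pi x).

Definition bijective_nat (pi : nat -> nat) : Prop :=
  exists pi', (forall x, pi' (pi x) = x) /\ (forall x, pi (pi' x) = x).

Definition variant (l r l' r' : term F) : Prop :=
  exists pi, bijective_nat pi /\ l = subst (renaming pi) l' /\ r = subst (renaming pi) r'.

Definition unifier (sg : sub) (a b : term F) : Prop := subst sg a = subst sg b.

Definition mgu (sg : sub) (a b : term F) : Prop :=
  unifier sg a b /\
  forall tau, unifier tau a b -> exists dl, forall x, tau x = subst dl (sg x).

Definition prime_cp (R E1 E2 : pairs) (t u : term F) : Prop :=
  exists l1 r1 l2 r2 l1' r1' l2' r2' (p : pos) (sg : sub) (l2p : term F),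
    E1 l1' r1' /\ variant l1 r1 l1' r1' /\
    E2 l2' r2' /\ variant l2 r2 l2' r2' /\
    (forall x, In x (vars l1 ++ vars r1) -> ~ In x (vars l2 ++ vars r2)) /\
    subt_at l2 p = Some l2p /\ (exists f ts, l2p = Fun f ts) /\
    mgu sg l1 l2p /\
    (p = [] -> ~ variant l1 r1 l2 r2) /\
    replace_at (subst sg l2) p (subst sg r1) = Some t /\
    u = subst sg r2 /\
    (forall sp, subt_at (subst sg l2) p = Some sp ->
       forall q w, q <> [] -> subt_at sp q = Some w -> NF R w).

Definition PCP (R : pairs) : pairs := prime_cp R R R.

Definition PCPpm (R B : pairs) : pairs :=
  fun t u => prime_cp R R (Bpm B) t u \/ prime_cp R (Bpm B) R t u.

Definition nabla (R : pairs) (s t u : term F) : Prop :=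
  clos_trans _ (rstep R) s t /\ clos_trans _ (rstep R) s u /\
  (joinable R t u \/ sym_step (PCP R) t u).

Definition tnabla (B R : pairs) (s t u : term F) : Prop :=
  clos_trans _ (rstep R) s t /\ B_equiv B s u /\
  (joinable_B B R t u \/ sym_step (PCPpm R B) t u).

End Terms.

(* Peaks are analysed by induction on the common source. Steps in different arguments
   commute, steps in the same argument are handled by induction, so one step may be assumed
   to be at the root, with redex [l sg]. If the other redex is prime, it either lies inside
   some [sg x] -- then contracting it in every copy of [x] (one copy only, by left-linearity of
   [l]) closes the peak by rewriting -- or it overlaps a non-variable position of [l] and the
   peak is an instance of a prime critical pair, obtained from an mgu after renaming apart.
   If it is not prime, an innermost redex below it gives a prime step [s -> v]; [v] is related
   to both ends by the prime case, once inside the inner redex and once at the root. *)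

From Stdlib Require Import List Relations Arith Lia Classical.
Import ListNotations.
Set Implicit Arguments.

(* The argument-list update performed by [replace_at], so that the two agree by conversion. *)
Definition set_nth {A : Type} (i : nat) (xs : list A) (b : A) : list A :=
  firstn i xs ++ b :: skipn (S i) xs.

Section SetNth.
Variable A : Type.
Implicit Types (xs : list A) (a b c : A).

Lemma nth_error_Some_lt xs i a : nth_error xs i = Some a -> i < length xs.
Proof. intros H. apply nth_error_Some. congruence. Qed.

Lemma nth_error_set_nth i xs b j : i < length xs ->
  nth_error (set_nth i xs b) j = if j =? i then Some b else nth_error xs j.
Proof.
  unfold set_nth; intros Hi.
  assert (Hf : length (firstn i xs) = i) by (rewrite length_firstn; lia).
  destruct (lt_eq_lt_dec j i) as [[H|H]|H].
  - rewrite nth_error_app1, nth_error_firstn by lia.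
    replace (j =? i) with false by (symmetry; apply Nat.eqb_neq; lia).
    replace (j <? i) with true by (symmetry; apply Nat.ltb_lt; lia). reflexivity.
  - subst. rewrite nth_error_app2, Hf, Nat.sub_diag, Nat.eqb_refl by lia. reflexivity.
  - rewrite nth_error_app2, Hf by lia.
    replace (j =? i) with false by (symmetry; apply Nat.eqb_neq; lia).
    destruct (j - i) as [|n] eqn:E; [lia|].
    change (nth_error (skipn (S i) xs) n = nth_error xs j).
    rewrite nth_error_skipn. f_equal. lia.
Qed.

Lemma length_set_nth i xs b : i < length xs -> length (set_nth i xs b) = length xs.
Proof.
  intros. unfold set_nth. rewrite length_app. cbn [length].
  rewrite length_firstn, length_skipn. lia.
Qed.

Lemma nth_error_set_nth_eq i xs a b : nth_error xs i = Some a ->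
  nth_error (set_nth i xs b) i = Some b.
Proof.
  intros H. rewrite nth_error_set_nth, Nat.eqb_refl by (eapply nth_error_Some_lt; eauto).
  reflexivity.
Qed.

Lemma set_nth_set_nth i xs b c : i < length xs ->
  set_nth i (set_nth i xs b) c = set_nth i xs c.
Proof.
  intros. apply nth_error_ext; intro j.
  rewrite !nth_error_set_nth; try rewrite length_set_nth; auto.
  destruct (j =? i); reflexivity.
Qed.

Lemma set_nth_comm i j xs b c : i < length xs -> j < length xs -> i <> j ->
  set_nth i (set_nth j xs c) b = set_nth j (set_nth i xs b) c.
Proof.
  intros. apply nth_error_ext; intro k.
  rewrite !nth_error_set_nth; try rewrite length_set_nth; auto.
  destruct (k =? i) eqn:E1, (k =? j) eqn:E2; auto.
  apply Nat.eqb_eq in E1, E2. lia.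
Qed.

Lemma set_nth_nth_error i xs a : nth_error xs i = Some a -> set_nth i xs a = xs.
Proof. intros. apply firstn_skipn_middle; assumption. Qed.

Lemma set_nth_app xs a b ys : set_nth (length xs) (xs ++ a :: ys) b = xs ++ b :: ys.
Proof.
  induction xs as [|x xs IH]; [reflexivity|].
  change (x :: set_nth (length xs) (xs ++ a :: ys) b = x :: xs ++ b :: ys). f_equal. exact IH.
Qed.

Lemma NoDup_app_disjoint xs ys x : NoDup (xs ++ ys) -> In x xs -> ~ In x ys.
Proof.
  induction xs as [|a xs IH]; simpl; intros H Hx; [contradiction|].
  inversion H as [|? ? Hn Hnd]; subst. destruct Hx as [<-|Hx]; eauto.
  intro. apply Hn, in_or_app; auto.
Qed.

Lemma Forall2_of_nth_error (Rel : A -> A -> Prop) xs ys : length xs = length ys ->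
  (forall n a b, nth_error xs n = Some a -> nth_error ys n = Some b -> Rel a b) ->
  Forall2 Rel xs ys.
Proof.
  revert ys; induction xs; intros [|y ys]; simpl; intros H1 H2; try discriminate; constructor.
  - apply (H2 0); auto.
  - apply IHxs; auto. intros n. apply (H2 (S n)).
Qed.

End SetNth.

Lemma map_set_nth {A B : Type} (g : A -> B) i xs b :
  map g (set_nth i xs b) = set_nth i (map g xs) (g b).
Proof. unfold set_nth. rewrite map_app, firstn_map, skipn_map. reflexivity. Qed.

Section Terms.
Context {F : Type}.
Implicit Types (t u s v w : term F) (ts us : list (term F)) (f : F) (sg : sub F) (p q : pos)
  (E B : pairs F).

Definition term_nested_ind (P : term F -> Prop)
  (HV : forall x, P (Var x))
  (HF : forall f ts, Forall P ts -> P (Fun f ts)) : forall t, P t :=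
  fix go t := match t with
  | Var x => HV x
  | Fun f ts => HF f ts ((fix go_list l : Forall P l := match l with
       | [] => Forall_nil _
       | a :: l' => Forall_cons _ (go a) (go_list l') end) ts)
  end.

Lemma subst_ext_on_vars t (a b : sub F) :
  (forall x, In x (vars t) -> a x = b x) -> subst a t = subst b t.
Proof.
  induction t as [x|f ts IH] using term_nested_ind; simpl; intros H.
  - apply H; auto.
  - f_equal. induction IH as [|t ts Ht Hts IHl]; simpl in *; auto.
    f_equal; [apply Ht | apply IHl]; intros x Hx; apply H, in_or_app; auto.
Qed.

Lemma subst_ext t (a b : sub F) : (forall x, a x = b x) -> subst a t = subst b t.
Proof. intros; apply subst_ext_on_vars; auto. Qed.

Lemma subst_subst t (a b : sub F) :
  subst a (subst b t) = subst (fun x => subst a (b x)) t.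
Proof.
  induction t as [x|f ts IH] using term_nested_ind; simpl; auto.
  f_equal. rewrite map_map. induction IH; simpl; f_equal; auto.
Qed.

Lemma subst_Var t : subst (@Var F) t = t.
Proof.
  induction t as [x|f ts IH] using term_nested_ind; simpl; auto.
  f_equal. induction IH; simpl; f_equal; auto.
Qed.

Lemma subst_eq_agree_on_vars t (a b : sub F) : subst a t = subst b t ->
  forall x, In x (vars t) -> a x = b x.
Proof.
  induction t as [y|f ts IH] using term_nested_ind; simpl; intros H x Hx.
  - destruct Hx as [<-|[]]; auto.
  - injection H as H. induction IH; simpl in *; [contradiction|].
    injection H as H1 H2. apply in_app_or in Hx as [Hx|Hx]; eauto.
Qed.

Lemma in_vars_subst t sg y : In y (vars (subst sg t)) ->
  exists x, In x (vars t) /\ In y (vars (sg x)).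
Proof.
  induction t as [x|f ts IH] using term_nested_ind; simpl; intros H.
  - exists x; auto.
  - induction IH as [|t ts Ht Hts IHl]; simpl in *; [contradiction|].
    apply in_app_or in H as [H|H].
    + destruct (Ht H) as [z [? ?]]. exists z; split; auto. apply in_or_app; auto.
    + destruct (IHl H) as [z [? ?]]. exists z; split; auto. apply in_or_app; auto.
Qed.

Fixpoint size t : nat :=
  match t with
  | Var _ => 1
  | Fun _ ts => S (list_sum (map size ts))
  end.

Lemma size_le_list_sum t ts : In t ts -> size t <= list_sum (map size ts).
Proof.
  induction ts; simpl; intros H; [contradiction|].
  destruct H; subst; [lia|]. specialize (IHts H); lia.
Qed.

Lemma size_var_le_subst t sg x : In x (vars t) -> size (sg x) <= size (subst sg t).
Proof.
  induction t as [y|f ts IH] using term_nested_ind; simpl; intros H.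
  - destruct H as [<-|[]]; auto.
  - induction IH as [|t ts Ht Hts IHl]; simpl in *; [contradiction|].
    apply in_app_or in H as [H|H]; [specialize (Ht H) | specialize (IHl H)]; lia.
Qed.

Lemma size_var_lt_subst t sg x : In x (vars t) -> t <> Var x ->
  size (sg x) < size (subst sg t).
Proof.
  destruct t as [y|f ts]; simpl; intros H Hn.
  - destruct H as [<-|[]]; congruence.
  - apply in_flat_map in H as [t [Ht Hx]].
    pose proof (@size_var_le_subst t sg x Hx).
    pose proof (size_le_list_sum _ _ (in_map (subst sg) ts t Ht)). lia.
Qed.

(** * Positions *)

Lemma replace_at_cons f ts i q u :
  replace_at (Fun f ts) (i :: q) u =
  match nth_error ts i with
  | Some ti => match replace_at ti q u with
               | Some ti' => Some (Fun f (set_nth i ts ti'))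
               | None => None end
  | None => None
  end.
Proof. reflexivity. Qed.

Lemma subt_at_subst p t w sg : subt_at t p = Some w ->
  subt_at (subst sg t) p = Some (subst sg w).
Proof.
  revert t; induction p as [|i p IH]; intros t H; [injection H as <-; reflexivity|].
  destruct t as [x|f ts]; [discriminate|]. simpl in *.
  rewrite nth_error_map. destruct (nth_error ts i); [apply IH; auto | discriminate].
Qed.

Lemma replace_at_subst p t a b sg : replace_at t p a = Some b ->
  replace_at (subst sg t) p (subst sg a) = Some (subst sg b).
Proof.
  revert t b; induction p as [|i p IH]; intros t b H; [injection H as <-; reflexivity|].
  destruct t as [x|f ts]; [discriminate|]. simpl in *.
  rewrite nth_error_map. destruct (nth_error ts i) as [ti|]; [|discriminate]. simpl.
  destruct (replace_at ti p a) as [ti'|] eqn:E; [|discriminate].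
  rewrite (IH _ _ E). injection H as <-.
  change (Some (Fun f (set_nth i (map (subst sg) ts) (subst sg ti')))
          = Some (Fun f (map (subst sg) (set_nth i ts ti')))).
  rewrite map_set_nth. reflexivity.
Qed.

Lemma replace_at_defined p t w a : subt_at t p = Some w ->
  exists b, replace_at t p a = Some b.
Proof.
  revert t; induction p as [|i p IH]; intros [x|f ts] H; simpl in *; eauto; try discriminate.
  destruct (nth_error ts i); [|discriminate].
  destruct (IH _ H) as [b Hb]. rewrite Hb. eauto.
Qed.

Lemma subt_at_replace_at p t a b : replace_at t p a = Some b -> subt_at b p = Some a.
Proof.
  revert t b; induction p as [|i p IH]; intros t b H; [injection H as <-; reflexivity|].
  destruct t as [x|f ts]; [discriminate|]. rewrite replace_at_cons in H.
  destruct (nth_error ts i) eqn:E; [|discriminate].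
  destruct (replace_at t p a) as [t'|] eqn:E2; [|discriminate]. injection H as <-.
  change (subt_at (Fun f (set_nth i ts t')) (i :: p) = Some a). simpl.
  erewrite nth_error_set_nth_eq by eauto. eauto.
Qed.

Lemma replace_at_replace_at p t a b c : replace_at t p a = Some b ->
  replace_at b p c = replace_at t p c.
Proof.
  revert t b; induction p as [|i p IH]; intros t b H; [reflexivity|].
  destruct t as [x|f ts]; [discriminate|]. rewrite replace_at_cons in H.
  destruct (nth_error ts i) eqn:E; [|discriminate].
  destruct (replace_at t p a) as [t'|] eqn:E2; [|discriminate]. injection H as <-.
  rewrite !replace_at_cons. erewrite nth_error_set_nth_eq by eauto.
  rewrite (IH _ _ E2), E. destruct (replace_at t p c); auto.
  rewrite set_nth_set_nth by (eapply nth_error_Some_lt; eauto). reflexivity.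
Qed.

Lemma replace_at_subt_at p t w : subt_at t p = Some w -> replace_at t p w = Some t.
Proof.
  revert t; induction p as [|i p IH]; intros t H; [simpl in *; congruence|].
  destruct t as [x|f ts]; [discriminate|]. simpl in H. rewrite replace_at_cons.
  destruct (nth_error ts i) eqn:E; [|discriminate].
  rewrite (IH _ H). change (Some (Fun f (set_nth i ts t)) = Some (Fun f ts)).
  rewrite set_nth_nth_error; auto.
Qed.

Lemma subt_at_app p q t :
  subt_at t (p ++ q) = match subt_at t p with Some w => subt_at w q | None => None end.
Proof.
  revert t; induction p as [|i p IH]; intros [x|f ts]; simpl; auto.
  destruct (nth_error ts i); auto.
Qed.

Lemma replace_at_app p q t w a w' : subt_at t p = Some w -> replace_at w q a = Some w' ->
  replace_at t (p ++ q) a = replace_at t p w'.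
Proof.
  revert t; induction p as [|i p IH]; intros t H1 H2; [simpl in *; congruence|].
  destruct t as [x|f ts]; [discriminate|]. simpl in H1.
  change ((i :: p) ++ q) with (i :: (p ++ q)). rewrite !replace_at_cons.
  destruct (nth_error ts i); [|discriminate]. rewrite (IH _ H1 H2). reflexivity.
Qed.

Lemma size_subt_at p t w : subt_at t p = Some w -> size w <= size t.
Proof.
  revert t; induction p as [|i p IH]; intros t H; [injection H as ->; auto|].
  destruct t as [x|f ts]; [discriminate|]. simpl in *.
  destruct (nth_error ts i) eqn:E; [|discriminate].
  apply IH in H. apply nth_error_In, size_le_list_sum in E. lia.
Qed.

Lemma size_subt_at_lt p t w : p <> [] -> subt_at t p = Some w -> size w < size t.
Proof.
  destruct p as [|i p]; [congruence|]. intros _.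
  destruct t as [x|f ts]; simpl; [discriminate|].
  destruct (nth_error ts i) eqn:E; [|discriminate].
  intros H. apply size_subt_at in H. apply nth_error_In, size_le_list_sum in E. lia.
Qed.

Lemma subt_at_var_in_vars p t x : subt_at t p = Some (Var x) -> In x (vars t).
Proof.
  revert t; induction p as [|i p IH]; intros t H; [injection H as ->; simpl; auto|].
  destruct t as [y|f ts]; [discriminate|]. simpl in *.
  destruct (nth_error ts i) eqn:E; [|discriminate].
  apply in_flat_map. exists t. split; eauto using nth_error_In.
Qed.

(** * Closure under contexts *)

Definition ctx_closed (Rel : term F -> term F -> Prop) : Prop :=
  forall f ts i a b, nth_error ts i = Some a -> Rel a b ->
    Rel (Fun f ts) (Fun f (set_nth i ts b)).

Lemma ctx_closed_set_nth Rel : ctx_closed Rel ->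
  forall f ts i a b c, nth_error ts i = Some a -> Rel b c ->
    Rel (Fun f (set_nth i ts b)) (Fun f (set_nth i ts c)).
Proof.
  intros HR f ts i a b c Ha H.
  assert (Hi : i < length ts) by (eapply nth_error_Some_lt; eauto).
  rewrite <- (set_nth_set_nth ts b c Hi). eapply HR; eauto using nth_error_set_nth_eq.
Qed.

Lemma ctx_closed_or (P Q : term F -> term F -> Prop) : ctx_closed P -> ctx_closed Q ->
  ctx_closed (fun a b => P a b \/ Q a b).
Proof. intros HP HQ f ts i a b Ha [H|H]; [left; eapply HP | right; eapply HQ]; eauto. Qed.

Lemma clos_trans_ctx_closed Rel : ctx_closed Rel -> ctx_closed (clos_trans _ Rel).
Proof.
  intros HR f ts i a b Ha H. revert ts Ha.
  induction H as [a b H|a b c _ IH1 _ IH2]; intros ts Ha.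
  - apply t_step. eapply HR; eauto.
  - eapply t_trans; [apply IH1; eauto|].
    rewrite <- (set_nth_set_nth ts b c (nth_error_Some_lt _ _ Ha)).
    apply IH2. eapply nth_error_set_nth_eq; eauto.
Qed.

Lemma clos_refl_trans_ctx_closed Rel : ctx_closed Rel -> ctx_closed (clos_refl_trans _ Rel).
Proof.
  intros HR f ts i a b Ha H. revert ts Ha.
  induction H as [a b H|a|a b c _ IH1 _ IH2]; intros ts Ha.
  - apply rt_step. eapply HR; eauto.
  - rewrite set_nth_nth_error; auto. apply rt_refl.
  - eapply rt_trans; [apply IH1; eauto|].
    rewrite <- (set_nth_set_nth ts b c (nth_error_Some_lt _ _ Ha)).
    apply IH2. eapply nth_error_set_nth_eq; eauto.
Qed.

Lemma ctx_closed_replace_at Rel : ctx_closed Rel -> forall p s a b sa sb,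
  replace_at s p a = Some sa -> replace_at s p b = Some sb -> Rel a b -> Rel sa sb.
Proof.
  intros HR p. induction p as [|i p IH]; intros s a b sa sb H1 H2 H; [simpl in *; congruence|].
  destruct s as [z|f ts]; [discriminate|]. rewrite replace_at_cons in H1, H2.
  destruct (nth_error ts i) as [ti|] eqn:E1; [|discriminate].
  destruct (replace_at ti p a) eqn:E2; [|discriminate].
  destruct (replace_at ti p b) eqn:E3; [|discriminate].
  injection H1 as <-. injection H2 as <-. eapply ctx_closed_set_nth; eauto.
Qed.

Lemma rstep_root E l r sg : E l r -> rstep E (subst sg l) (subst sg r).
Proof. intros. exists l, r, [], sg. auto. Qed.

Lemma rstep_ctx_closed E : ctx_closed (rstep E).
Proof.
  intros f ts i a b Ha [l [r [p [sg [H1 [H2 H3]]]]]].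
  exists l, r, (i :: p), sg. simpl. rewrite Ha, H3. auto.
Qed.

Lemma rstep_cases E s t : rstep E s t ->
  (exists l r sg, E l r /\ s = subst sg l /\ t = subst sg r) \/
  (exists f ts i a a', s = Fun f ts /\ nth_error ts i = Some a /\ rstep E a a' /\
     t = Fun f (set_nth i ts a')).
Proof.
  intros [l [r [[|i p] [sg [H1 [H2 H3]]]]]].
  - left. simpl in *. exists l, r, sg. split; [|split]; congruence.
  - right. destruct s as [z|f ts]; [discriminate|].
    simpl in H2. rewrite replace_at_cons in H3.
    destruct (nth_error ts i) as [a|] eqn:E1; [|discriminate].
    destruct (replace_at a p (subst sg r)) as [a'|] eqn:E2; [|discriminate].
    exists f, ts, i, a, a'. injection H3 as <-. repeat split; auto.
    exists l, r, p, sg. auto.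
Qed.

Lemma rstep_subst E s t d : rstep E s t -> rstep E (subst d s) (subst d t).
Proof.
  intros [l [r [p [sg [H1 [H2 H3]]]]]].
  exists l, r, p, (fun x => subst d (sg x)). rewrite <- !subst_subst.
  auto using subt_at_subst, replace_at_subst.
Qed.

Lemma NF_of_NF_subst E w d : NF E (subst d w) -> NF E w.
Proof. intros H [w' Hw]. apply H. exists (subst d w'). apply rstep_subst; auto. Qed.

Lemma sym_step_sym E a b : sym_step E a b -> sym_step E b a.
Proof. intros [H|H]; [right|left]; auto. Qed.

Lemma sym_step_ctx_closed E : ctx_closed (sym_step E).
Proof.
  intros f ts i a b Ha [H|H]; [left; eapply rstep_ctx_closed; eauto|right].
  rewrite <- (set_nth_nth_error _ _ Ha) at 2.
  eapply ctx_closed_set_nth; eauto using rstep_ctx_closed.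
Qed.

Lemma rstep_mono E E' a b : (forall l r, E l r -> E' l r) -> rstep E a b -> rstep E' a b.
Proof. intros HE [l [r [q [sg [H1 H2]]]]]. exists l, r, q, sg. auto. Qed.

Lemma rstep_flip E a b : rstep E a b -> rstep (fun l r => E r l) b a.
Proof.
  intros [l [r [q [sg [H1 [H2 H3]]]]]]. exists r, l, q, sg. split; auto. split.
  - eapply subt_at_replace_at; eauto.
  - rewrite (replace_at_replace_at _ _ _ _ H3). eapply replace_at_subt_at; eauto.
Qed.

Lemma sym_step_iff_rstep_Bpm B s u : sym_step B s u <-> rstep (Bpm B) s u.
Proof.
  unfold Bpm. split.
  - intros [H|H]; [|apply rstep_flip in H]; revert H; apply rstep_mono; auto.
  - intros [l [r [q [sg [[H1|H1] H2]]]]]; [left | right].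
    + exists l, r, q, sg. auto.
    + apply (rstep_flip (E := fun l r => B r l)). exists l, r, q, sg. auto.
Qed.

Lemma B_equiv_of_rstep_Bpm B s u : rstep (Bpm B) s u -> B_equiv B s u.
Proof. intros. apply rt_step, sym_step_iff_rstep_Bpm. assumption. Qed.

Lemma joinable_sym E a b : joinable E a b -> joinable E b a.
Proof. intros [v [H1 H2]]. exists v; auto. Qed.

Lemma joinable_ctx_closed E : ctx_closed (joinable E).
Proof.
  intros f ts i a b Ha [v [H1 H2]]. exists (Fun f (set_nth i ts v)). split.
  - eapply clos_refl_trans_ctx_closed; eauto using rstep_ctx_closed.
  - eapply ctx_closed_set_nth; eauto using clos_refl_trans_ctx_closed, rstep_ctx_closed.
Qed.

Lemma B_equiv_ctx_closed B : ctx_closed (B_equiv B).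
Proof. apply clos_refl_trans_ctx_closed, sym_step_ctx_closed. Qed.

Lemma joinable_B_ctx_closed B E : ctx_closed (joinable_B B E).
Proof.
  intros f ts i a b Ha [a' [b' [H1 [H2 H3]]]].
  exists (Fun f (set_nth i ts a')), (Fun f (set_nth i ts b')). split; [|split].
  - eapply clos_refl_trans_ctx_closed; eauto using rstep_ctx_closed.
  - eapply ctx_closed_set_nth; eauto using B_equiv_ctx_closed.
  - eapply ctx_closed_set_nth; eauto using clos_refl_trans_ctx_closed, rstep_ctx_closed.
Qed.

Definition sub_update sg x y : sub F := fun z => if z =? x then y else sg z.

Section CongruencePreorder.
Variable Rel : term F -> term F -> Prop.
Hypothesis Rel_refl : forall a, Rel a a.
Hypothesis Rel_trans : forall a b c, Rel a b -> Rel b c -> Rel a c.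
Hypothesis Rel_ctx : ctx_closed Rel.

Lemma ctx_closed_Forall2 f ts us : Forall2 Rel ts us -> Rel (Fun f ts) (Fun f us).
Proof.
  intros H. enough (K : forall xs, Rel (Fun f (xs ++ ts)) (Fun f (xs ++ us))) by apply (K []).
  induction H as [|a b ts us Hab _ IH]; intros xs; [apply Rel_refl|].
  apply Rel_trans with (Fun f (xs ++ b :: ts)).
  - rewrite <- (set_nth_app xs a b ts). apply Rel_ctx with a; auto.
    rewrite nth_error_app2, Nat.sub_diag by lia. reflexivity.
  - specialize (IH (xs ++ [b])). rewrite <- !app_assoc in IH. exact IH.
Qed.

Lemma subst_mono_on_vars c (a b : sub F) :
  (forall z, In z (vars c) -> Rel (a z) (b z)) -> Rel (subst a c) (subst b c).
Proof.
  induction c as [z|f ts IH] using term_nested_ind; simpl; intros H; [auto|].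
  apply ctx_closed_Forall2. induction IH as [|t ts Ht Hts IHl]; simpl in *; constructor.
  - apply Ht. intros. apply H, in_or_app; auto.
  - apply IHl. intros. apply H, in_or_app; auto.
Qed.

Lemma subst_update_mono sg x y : Rel (sg x) y ->
  forall c, Rel (subst sg c) (subst (sub_update sg x y) c).
Proof.
  intros Hxy c. apply subst_mono_on_vars. intros z _. unfold sub_update.
  destruct (Nat.eqb_spec z x); subst; auto.
Qed.

Lemma replace_at_var_subst_update p l x sg y t : subt_at l p = Some (Var x) ->
  replace_at (subst sg l) p y = Some t -> Rel (sg x) y -> Rel t (subst (sub_update sg x y) l).
Proof.
  revert l t; induction p as [|i q IH]; intros l t H1 H2 H3.
  - simpl in *. injection H1 as ->. injection H2 as <-. simpl. unfold sub_update.
    rewrite Nat.eqb_refl. auto.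
  - destruct l as [z|f ts]; [discriminate|]. simpl in H1.
    destruct (nth_error ts i) as [a|] eqn:Ei; [|discriminate].
    change (subst sg (Fun f ts)) with (Fun f (map (subst sg) ts)) in H2.
    rewrite replace_at_cons, nth_error_map, Ei in H2. simpl in H2.
    destruct (replace_at (subst sg a) q y) as [a'|] eqn:E2; [|discriminate].
    injection H2 as <-. simpl. apply ctx_closed_Forall2.
    assert (Hl : i < length (map (subst sg) ts))
      by (rewrite length_map; eapply nth_error_Some_lt; eauto).
    apply Forall2_of_nth_error; [rewrite length_set_nth, !length_map; auto|].
    intros n b c Hb Hc. rewrite nth_error_set_nth, nth_error_map in Hb by exact Hl.
    rewrite nth_error_map in Hc. destruct (Nat.eqb_spec n i).
    + subst. rewrite Ei in Hc. injection Hb as <-. injection Hc as <-. eauto.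
    + destruct (nth_error ts n); [|discriminate].
      injection Hb as <-. injection Hc as <-. apply subst_update_mono; auto.
Qed.

End CongruencePreorder.

Lemma NoDup_flat_map_vars_disjoint ts i j a b x : NoDup (flat_map (@vars F) ts) ->
  nth_error ts i = Some a -> nth_error ts j = Some b -> i <> j -> In x (vars a) -> ~ In x (vars b).
Proof.
  revert i j; induction ts as [|c ts IH]; intros i j H Ha Hb Hij Hx; [destruct i; discriminate|].
  simpl in H. destruct i, j; simpl in Ha, Hb; try lia.
  - injection Ha as ->. intro. apply (NoDup_app_disjoint _ _ _ H Hx).
    apply in_flat_map. eauto using nth_error_In.
  - injection Hb as ->. intro Hb'. apply (NoDup_app_disjoint _ _ _ H Hb').
    apply in_flat_map. eauto using nth_error_In.
  - apply NoDup_app_remove_l in H. eapply IH with (i := i) (j := j); eauto.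
Qed.

Lemma NoDup_flat_map_vars_nth ts i a : NoDup (flat_map (@vars F) ts) ->
  nth_error ts i = Some a -> NoDup (vars a).
Proof.
  revert i; induction ts as [|c ts IH]; intros i H Ha; [destruct i; discriminate|].
  simpl in H. destruct i; simpl in Ha.
  - injection Ha as ->. eapply NoDup_app_remove_r; eauto.
  - apply NoDup_app_remove_l in H. eauto.
Qed.

Lemma replace_at_var_linear p l x sg y t : NoDup (vars l) -> subt_at l p = Some (Var x) ->
  replace_at (subst sg l) p y = Some t -> t = subst (sub_update sg x y) l.
Proof.
  revert l t; induction p as [|i q IH]; intros l t Hnd H1 H2.
  - simpl in *. injection H1 as ->. injection H2 as <-. simpl. unfold sub_update.
    rewrite Nat.eqb_refl. reflexivity.
  - destruct l as [z|f ts]; [discriminate|]. simpl in H1, Hnd.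
    destruct (nth_error ts i) as [a|] eqn:Ei; [|discriminate].
    change (subst sg (Fun f ts)) with (Fun f (map (subst sg) ts)) in H2.
    rewrite replace_at_cons, nth_error_map, Ei in H2. simpl in H2.
    destruct (replace_at (subst sg a) q y) as [a'|] eqn:E2; [|discriminate].
    injection H2 as <-. simpl. f_equal.
    assert (Hl : i < length (map (subst sg) ts))
      by (rewrite length_map; eapply nth_error_Some_lt; eauto).
    apply nth_error_ext. intros n. rewrite nth_error_set_nth by exact Hl.
    rewrite !nth_error_map. destruct (Nat.eqb_spec n i).
    + subst. rewrite Ei. simpl. f_equal. eauto using NoDup_flat_map_vars_nth.
    + destruct (nth_error ts n) as [b|] eqn:En; [|reflexivity]. simpl. f_equal.
      apply subst_ext_on_vars. intros z Hz. unfold sub_update.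
      destruct (Nat.eqb_spec z x); subst; [exfalso|reflexivity].
      eapply (@NoDup_flat_map_vars_disjoint ts i n); eauto using subt_at_var_in_vars.
Qed.

(** * Unification *)

Definition eqns := list (term F * term F).
Definition solves sg (es : eqns) : Prop :=
  Forall (fun e => subst sg (fst e) = subst sg (snd e)) es.
Definition solvable (es : eqns) : Prop := exists tau, solves tau es.
Definition has_mgu (es : eqns) : Prop :=
  exists sg, solves sg es /\ forall th, solves th es -> exists d, forall x, th x = subst d (sg x).
Definition eqn_vars (es : eqns) : list nat := flat_map (fun e => vars (fst e) ++ vars (snd e)) es.
Definition num_vars (es : eqns) : nat := length (nodup Nat.eq_dec (eqn_vars es)).
Definition eqn_size (es : eqns) : nat := list_sum (map (fun e => size (fst e) + size (snd e)) es).

Lemma num_vars_le es1 es2 : incl (eqn_vars es1) (eqn_vars es2) -> num_vars es1 <= num_vars es2.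
Proof.
  intros H. apply NoDup_incl_length; [apply NoDup_nodup|].
  intros y Hy. apply nodup_In in Hy. apply nodup_In. auto.
Qed.

Lemma num_vars_lt es1 es2 x : incl (eqn_vars es1) (eqn_vars es2) ->
  In x (eqn_vars es2) -> ~ In x (eqn_vars es1) -> num_vars es1 < num_vars es2.
Proof.
  intros H1 H2 H3. unfold num_vars, lt.
  change (S (length (nodup Nat.eq_dec (eqn_vars es1))))
    with (length (x :: nodup Nat.eq_dec (eqn_vars es1))).
  apply NoDup_incl_length.
  - constructor; [rewrite nodup_In; auto | apply NoDup_nodup].
  - intros y [<-|Hy]; apply nodup_In; auto. apply nodup_In in Hy. auto.
Qed.

Lemma has_mgu_equiv es1 es2 : (forall sg, solves sg es1 <-> solves sg es2) ->
  has_mgu es1 -> has_mgu es2.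
Proof.
  intros H [sg [H1 H2]]. exists sg. split; [apply H; auto|].
  intros th Hth. apply H2, H. assumption.
Qed.

Lemma solves_cons sg a b es :
  solves sg ((a, b) :: es) <-> subst sg a = subst sg b /\ solves sg es.
Proof. unfold solves. split; intros H; [inversion H | destruct H; constructor]; auto. Qed.

Lemma eqn_vars_cons a b es : eqn_vars ((a, b) :: es) = vars a ++ vars b ++ eqn_vars es.
Proof. unfold eqn_vars. simpl. rewrite app_assoc. reflexivity. Qed.

(* Variable elimination: solve [x = b] by the substitution [x := b] and recurse on the
   problem with one variable fewer. *)
Lemma has_mgu_eliminate x b es : b <> Var x ->
  (forall es', num_vars es' < num_vars ((Var x, b) :: es) -> solvable es' -> has_mgu es') ->
  solvable ((Var x, b) :: es) -> has_mgu ((Var x, b) :: es).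
Proof.
  intros Hb IH [tau Htau].
  apply solves_cons in Htau as [Htx Htes]. simpl in Htx.
  destruct (in_dec Nat.eq_dec x (vars b)) as [Hin|Hin].
  { exfalso. pose proof (size_var_lt_subst tau Hin Hb). rewrite Htx in H. lia. }
  set (rho := sub_update (@Var F) x b).
  assert (Hrb : subst rho b = b).
  { rewrite <- (subst_Var b) at 2. apply subst_ext_on_vars. intros y Hy. unfold rho, sub_update.
    destruct (Nat.eqb_spec y x); subst; [contradiction | reflexivity]. }
  assert (Hfix : forall th, th x = subst th b -> forall t, subst th (subst rho t) = subst th t).
  { intros th Hth t. rewrite subst_subst. apply subst_ext. intros y. unfold rho, sub_update.
    destruct (Nat.eqb_spec y x); subst; auto. }
  set (es2 := map (fun e => (subst rho (fst e), subst rho (snd e))) es).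
  assert (Hes2 : forall th, th x = subst th b -> (solves th es2 <-> solves th es)).
  { intros th Hth. unfold solves, es2. rewrite Forall_map. simpl.
    split; apply Forall_impl; intros [c d]; simpl; rewrite !Hfix; auto. }
  assert (Hrho : forall t y, In y (vars (subst rho t)) ->
            y <> x /\ (In y (vars b) \/ In y (vars t))).
  { intros t y Hy. apply in_vars_subst in Hy as [z [Hz Hy]]. unfold rho, sub_update in Hy.
    destruct (Nat.eqb_spec z x) as [->|Hzx].
    - split; [intros ->; contradiction | auto].
    - simpl in Hy. destruct Hy as [<-|[]]. auto. }
  assert (Hvars : forall y, In y (eqn_vars es2) -> y <> x /\ In y (eqn_vars ((Var x, b) :: es))).
  { intros y Hy. unfold es2, eqn_vars in Hy. rewrite flat_map_concat_map, map_map in Hy.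
    apply in_concat in Hy as [l [Hl Hy]]. apply in_map_iff in Hl as [[c d] [<- Hcd]].
    simpl in Hy. rewrite eqn_vars_cons, !in_app_iff. unfold eqn_vars. rewrite in_flat_map.
    apply in_app_or in Hy as [Hy|Hy]; apply Hrho in Hy as [Hyx [Hy|Hy]];
      split; auto; right; right; exists (c, d); simpl; rewrite in_app_iff; auto. }
  destruct (IH es2) as [sg' [Hs1 Hs2]].
  { apply num_vars_lt with x;
      [intros y Hy; apply Hvars; auto | rewrite eqn_vars_cons; simpl; auto|].
    intros Hy. apply Hvars in Hy as [Hy _]. auto. }
  { exists tau. apply Hes2; auto. }
  exists (fun y => subst sg' (rho y)). split.
  - apply solves_cons. split.
    + simpl. unfold rho at 1, sub_update. rewrite Nat.eqb_refl, <- subst_subst, Hrb. reflexivity.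
    + unfold solves, es2 in *. rewrite Forall_map in Hs1.
      eapply Forall_impl; [|exact Hs1]. intros [c d]; simpl. rewrite <- !subst_subst. auto.
  - intros th Hth. apply solves_cons in Hth as [Hthx Hthes]. simpl in Hthx.
    destruct (Hs2 th) as [d Hd]; [apply Hes2; auto|].
    exists d. intros y. transitivity (subst th (rho y)); [symmetry; exact (Hfix th Hthx (Var y))|].
    rewrite subst_subst. apply subst_ext. auto.
Qed.

Lemma solves_decompose sg f ts us es : length ts = length us ->
  solves sg ((Fun f ts, Fun f us) :: es) <-> solves sg (combine ts us ++ es).
Proof.
  intros Hlen. unfold solves at 2. rewrite Forall_app, solves_cons. simpl.
  enough (K : solves sg (combine ts us) <-> map (subst sg) ts = map (subst sg) us).
  { unfold solves in K. rewrite K. split; [intros [H1 H2]; injection H1; auto|].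
    intros [-> H]; auto. }
  revert us Hlen; induction ts as [|a ts IH]; intros [|b us] Hlen; try discriminate.
  - split; constructor.
  - injection Hlen as Hlen. change (combine (a :: ts) (b :: us)) with ((a, b) :: combine ts us).
    rewrite solves_cons, IH by assumption. simpl.
    split; [intros [-> ->]; reflexivity | intros K; injection K; auto].
Qed.

Lemma eqn_size_combine ts us : length ts = length us ->
  eqn_size (combine ts us) = list_sum (map size ts) + list_sum (map size us).
Proof.
  revert us; induction ts; intros [|b us] H; try discriminate; auto.
  injection H as H. unfold eqn_size in *. simpl. rewrite IHts; auto. lia.
Qed.

Lemma eqn_vars_combine ts us y : In y (eqn_vars (combine ts us)) ->
  In y (flat_map (@vars F) ts) \/ In y (flat_map (@vars F) us).
Proof.
  revert us; induction ts as [|a ts IH]; intros [|b us] H; simpl in *; try contradiction.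
  rewrite !in_app_iff in *. destruct H as [[H|H]|H]; auto. apply IH in H as [H|H]; auto.
Qed.

(* Martelli-Montanari, by lexicographic induction on the number of variables and the size. *)
Lemma solvable_has_mgu_bounded n sz es : num_vars es <= n -> eqn_size es <= sz ->
  solvable es -> has_mgu es.
Proof.
  revert sz es. induction n as [n IHn] using lt_wf_ind.
  intro sz. induction sz as [sz IHs] using lt_wf_ind.
  intros es Hn Hs Hu. destruct es as [|[a b] es].
  { exists (@Var F). split; [constructor|]. intros th _. exists th. auto. }
  assert (Helim : forall x c, c <> Var x -> solvable ((Var x, c) :: es) ->
            num_vars ((Var x, c) :: es) <= n -> has_mgu ((Var x, c) :: es)).
  { intros x c Hc Hu' Hn'. apply has_mgu_eliminate; auto. intros es' Hlt Hu''.
    apply (IHn (num_vars es')) with (sz := eqn_size es'); auto. lia. }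
  assert (Hsub : forall x c, incl (eqn_vars es) (eqn_vars ((x, c) :: es))).
  { intros x c y Hy. rewrite eqn_vars_cons, !in_app_iff. auto. }
  destruct Hu as [tau Hu]. apply solves_cons in Hu as [Hab Hes].
  destruct a as [x|f ts], b as [y|g us].
  - destruct (Nat.eq_dec y x) as [->|Hyx];
      [|apply Helim; [congruence | exists tau; apply solves_cons; auto | auto]].
    apply has_mgu_equiv with es; [intros sg; rewrite solves_cons; intuition|].
    apply (IHs (eqn_size es)); [unfold eqn_size in *; simpl in Hs; lia | | lia | exists tau; auto].
    etransitivity; [|exact Hn]. apply num_vars_le, Hsub.
  - apply Helim; [discriminate | exists tau; apply solves_cons; auto | auto].
  - apply has_mgu_equiv with ((Var y, Fun f ts) :: es);
      [intros sg; rewrite !solves_cons; intuition|].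
    apply Helim; [discriminate | exists tau; apply solves_cons; auto|].
    etransitivity; [|exact Hn]. apply num_vars_le. rewrite !eqn_vars_cons.
    intros z Hz. rewrite !in_app_iff in *. tauto.
  - simpl in Hab. injection Hab as <- Hm.
    assert (Hlen : length ts = length us).
    { rewrite <- (length_map (subst tau) ts), <- (length_map (subst tau) us). congruence. }
    apply has_mgu_equiv with (combine ts us ++ es);
      [intros sg; symmetry; apply solves_decompose; auto|].
    apply (IHs (eqn_size (combine ts us ++ es))).
    + unfold eqn_size at 1. rewrite map_app, list_sum_app. fold (eqn_size (combine ts us)).
      rewrite eqn_size_combine by auto. unfold eqn_size in *. simpl in Hs. lia.
    + etransitivity; [|exact Hn]. apply num_vars_le. rewrite eqn_vars_cons. intros z Hz.
      unfold eqn_vars in Hz. rewrite flat_map_app in Hz. rewrite !in_app_iff.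
      apply in_app_or in Hz as [Hz|Hz]; [apply eqn_vars_combine in Hz; simpl; tauto | auto].
    + lia.
    + exists tau. apply (proj1 (@solves_decompose tau f ts us es Hlen)).
      apply solves_cons. simpl. rewrite Hm. auto.
Qed.

Lemma mgu_of_unifier (tau : sub F) a b : subst tau a = subst tau b -> exists sg, mgu sg a b.
Proof.
  intros H. destruct (@solvable_has_mgu_bounded _ _ [(a, b)] (le_n _) (le_n _)) as [sg [H1 H2]].
  - exists tau. apply solves_cons. split; [auto | constructor].
  - exists sg. split.
    + apply solves_cons in H1. apply H1.
    + intros th Hth. apply H2, solves_cons. split; [auto | constructor].
Qed.

(** * Prime critical pairs *)

Definition proper_subterms_NF (R : pairs F) (z : term F) : Prop :=
  forall q z', q <> [] -> subt_at z q = Some z' -> NF R z'.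

Lemma subt_at_subst_cases c sg p w : subt_at (subst sg c) p = Some w ->
  (exists p1 p2 x, p = p1 ++ p2 /\ subt_at c p1 = Some (Var x) /\ subt_at (sg x) p2 = Some w) \/
  (exists f ts, subt_at c p = Some (Fun f ts)).
Proof.
  revert p; induction c as [x|f ts IH] using term_nested_ind; intros p H.
  - left. exists [], p, x. auto.
  - destruct p as [|i p]; [right; simpl; eauto|].
    simpl in H. rewrite nth_error_map in H.
    destruct (nth_error ts i) as [a|] eqn:Ei; [|discriminate]. simpl in H.
    rewrite Forall_forall in IH.
    destruct (IH a (nth_error_In _ _ Ei) _ H) as [[p1 [p2 [x [-> [H1 H2]]]]]|[g [us Hg]]].
    + left. exists (i :: p1), p2, x. simpl. rewrite Ei. auto.
    + right. exists g, us. simpl. rewrite Ei. auto.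
Qed.

Lemma exists_innermost_redex R w : (exists w', rstep R w w') ->
  exists q l r sg, subt_at w q = Some (subst sg l) /\ R l r /\ proper_subterms_NF R (subst sg l).
Proof.
  remember (size w) as n. revert w Heqn.
  induction n as [n IH] using lt_wf_ind. intros w Hn [w' [l [r [p [sg [H1 [H2 H3]]]]]]].
  destruct (classic (proper_subterms_NF R (subst sg l))) as [Hp|Hp]; [exists p, l, r, sg; auto|].
  unfold proper_subterms_NF in Hp.
  apply not_all_ex_not in Hp as [q Hp]. apply not_all_ex_not in Hp as [z Hp].
  apply imply_to_and in Hp as [Hq Hp]. apply imply_to_and in Hp as [Hz Hnf].
  apply NNPP in Hnf.
  assert (Hs : size z < n).
  { subst n. pose proof (size_subt_at_lt _ Hq Hz). pose proof (size_subt_at _ _ H2). lia. }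
  destruct (IH _ Hs z eq_refl Hnf) as [q' [l' [r' [sg' [K1 K2]]]]].
  exists (p ++ q ++ q'), l', r', sg'.
  rewrite subt_at_app, H2; cbv beta iota; rewrite subt_at_app, Hz. auto.
Qed.

Lemma redex_below_of_not_proper_subterms_NF R z : ~ proper_subterms_NF R z ->
  exists q l r sg, q <> [] /\ subt_at z q = Some (subst sg l) /\ R l r /\
    proper_subterms_NF R (subst sg l).
Proof.
  intros Hp. unfold proper_subterms_NF in Hp.
  apply not_all_ex_not in Hp as [q Hp]. apply not_all_ex_not in Hp as [z' Hp].
  apply imply_to_and in Hp as [Hq Hp]. apply imply_to_and in Hp as [Hz Hnf].
  apply NNPP, exists_innermost_redex in Hnf as [q' [l [r [sg [K1 K2]]]]].
  exists (q ++ q'), l, r, sg. split; [|rewrite subt_at_app, Hz; auto].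
  intros H. apply app_eq_nil in H as [-> _]. auto.
Qed.

Lemma list_max_ge (l : list nat) z : In z l -> z <= list_max l.
Proof.
  intros H. pose proof (proj1 (list_max_le l (list_max l)) (le_n _)) as K.
  rewrite Forall_forall in K. auto.
Qed.

(* Swap [z] and [z + N] below [N]: this moves every variable of [a ++ b] above all of them. *)
Lemma rename_apart (a b : list nat) :
  exists pi, bijective_nat pi /\ (forall z, In z a -> ~ In (pi z) b).
Proof.
  set (N := S (list_max (a ++ b))).
  assert (HN : forall z, In z (a ++ b) -> z < N) by (intros z Hz; apply list_max_ge in Hz; lia).
  set (pi := fun z => if z <? N then z + N else if z <? N + N then z - N else z).
  exists pi. split.
  - exists pi. assert (K : forall z, pi (pi z) = z); [|auto].
    intros z. unfold pi.
    repeat match goal with |- context [?m <? ?n] => destruct (Nat.ltb_spec m n) end; lia.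
  - intros z Hz Hb. assert (Hza : z < N) by (apply HN, in_or_app; auto).
    assert (Hzb : pi z < N) by (apply HN, in_or_app; auto).
    unfold pi in Hzb. destruct (Nat.ltb_spec z N); lia.
Qed.

Lemma subst_rename_apart (sg1 sg2 : sub F) (a b : list nat) :
  exists pi tau, bijective_nat pi /\ (forall z, In z a -> ~ In (pi z) b) /\
    (forall z, In z a -> tau (pi z) = sg1 z) /\ (forall z, In z b -> tau z = sg2 z).
Proof.
  destruct (rename_apart a b) as [pi [[pi' [Hl Hr]] Hab]].
  exists pi, (fun z => if in_dec Nat.eq_dec z b then sg2 z else sg1 (pi' z)).
  split; [exists pi'; auto|]. split; [auto|]. split; intros z Hz.
  - destruct (in_dec Nat.eq_dec (pi z) b) as [Hb|_];
      [exfalso; eapply Hab; eauto | rewrite Hl; auto].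
  - destruct (in_dec Nat.eq_dec z b); [reflexivity | contradiction].
Qed.

Lemma vars_subst_renaming (pi : nat -> nat) t z : In z (vars (subst (@renaming F pi) t)) ->
  exists y, In y (vars t) /\ z = pi y.
Proof.
  intros H. apply in_vars_subst in H as [y [Hy [<-|[]]]]. eauto.
Qed.

(* The first disjunct is the excluded trivial overlap of a rule with a variant of itself. *)
Lemma prime_overlap_cp (R E1 E2 : pairs F) l1' r1' l2' r2' sg1 sg2 p f ts t :
  E1 l1' r1' -> E2 l2' r2' -> incl (vars r2') (vars l2') ->
  subt_at l2' p = Some (Fun f ts) ->
  subt_at (subst sg2 l2') p = Some (subst sg1 l1') ->
  replace_at (subst sg2 l2') p (subst sg1 r1') = Some t ->
  proper_subterms_NF R (subst sg1 l1') ->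
  t = subst sg2 r2' \/ rstep (prime_cp R E1 E2) t (subst sg2 r2').
Proof.
  intros HE1 HE2 Hincl Hp Hs Ht Hprime.
  destruct (subst_rename_apart sg1 sg2 (vars l1' ++ vars r1') (vars l2' ++ vars r2'))
    as [pi [tau [Hpi [Hapart [Htau1 Htau2]]]]].
  set (l1 := subst (@renaming F pi) l1'). set (r1 := subst (@renaming F pi) r1').
  assert (Hren : forall c, incl (vars c) (vars l1' ++ vars r1') ->
            subst tau (subst (@renaming F pi) c) = subst sg1 c).
  { intros c Hc. rewrite subst_subst. apply subst_ext_on_vars. intros z Hz. apply Htau1, Hc, Hz. }
  assert (Hl1 : subst tau l1 = subst sg1 l1') by (apply Hren; intros z; rewrite in_app_iff; auto).
  assert (Hr1 : subst tau r1 = subst sg1 r1') by (apply Hren; intros z; rewrite in_app_iff; auto).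
  assert (Hl2 : subst tau l2' = subst sg2 l2')
    by (apply subst_ext_on_vars; intros z Hz; apply Htau2, in_or_app; auto).
  assert (Hr2 : subst tau r2' = subst sg2 r2')
    by (apply subst_ext_on_vars; intros z Hz; apply Htau2, in_or_app; auto).
  assert (Hunif : subst tau l1 = subst tau (Fun f ts)).
  { pose proof (subt_at_subst _ _ tau Hp) as K. rewrite Hl2, Hs in K. rewrite Hl1. congruence. }
  destruct (mgu_of_unifier _ _ _ Hunif) as [sg [Hsg1 Hsg2]].
  destruct (Hsg2 tau Hunif) as [d Hd].
  assert (Hcomp : forall c, subst tau c = subst d (subst sg c))
    by (intros c; rewrite subst_subst; apply subst_ext; auto).
  pose proof (subt_at_subst _ _ sg Hp) as Hsp.
  destruct (replace_at_defined _ _ (subst sg r1) Hsp) as [cp Hcp].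
  destruct (classic (p = [] /\ variant l1 r1 l2' r2')) as [[-> [pi' [_ [Ev1 Ev2]]]]|Hnv].
  - left. simpl in Ht, Hp. injection Ht as <-. injection Hp as Hp.
    rewrite <- Hr1, <- Hr2, Ev2, subst_subst. apply subst_ext_on_vars. intros z Hz.
    rewrite <- Hp, Ev1, subst_subst in Hunif. apply (subst_eq_agree_on_vars _ _ _ Hunif).
    apply Hincl. assumption.
  - right. exists cp, (subst sg r2'), [], d. split; [|split].
    + exists l1, r1, l2', r2', l1', r1', l2', r2', p, sg, (Fun f ts).
      split; [auto|]. split; [exists pi; auto|]. split; [auto|].
      split; [exists (fun z => z); unfold renaming; rewrite !subst_Var;
              split; [exists (fun z => z)|]; auto|].
      split.
      { intros z Hz Hz2. apply in_app_or in Hz.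
        destruct Hz as [Hz|Hz]; apply vars_subst_renaming in Hz as [y [Hy ->]];
          eapply Hapart; eauto; apply in_or_app; auto. }
      split; [auto|]. split; [eauto|]. split; [split; auto|].
      split; [intros -> Hv; apply Hnv; auto|]. split; [auto|]. split; [auto|].
      intros sp Hsp' q w Hq Hw. rewrite Hsp in Hsp'. injection Hsp' as <-.
      apply NF_of_NF_subst with d. apply (Hprime q); auto.
      rewrite <- Hl1, Hunif, Hcomp. apply subt_at_subst. exact Hw.
    + simpl. pose proof (replace_at_subst _ _ _ d Hcp) as K.
      rewrite <- !Hcomp, Hl2, Hr1 in K. congruence.
    + simpl. f_equal. rewrite <- Hcomp. auto.
Qed.

(** * Peaks *)

Definition prime_step (R E : pairs F) s t : Prop :=
  exists l r p sg, E l r /\ subt_at s p = Some (subst sg l) /\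
    replace_at s p (subst sg r) = Some t /\ proper_subterms_NF R (subst sg l).

Lemma rstep_of_prime_step R E s t : prime_step R E s t -> rstep E s t.
Proof. intros [l [r [p [sg [H1 [H2 [H3 _]]]]]]]. exists l, r, p, sg. auto. Qed.

Lemma prime_overlap_cases (R E1 E2 : pairs F) l2 r2 sg2 t :
  E2 l2 r2 -> incl (vars r2) (vars l2) -> prime_step R E1 (subst sg2 l2) t ->
  (exists p1 x y, subt_at l2 p1 = Some (Var x) /\ rstep E1 (sg2 x) y /\
                  replace_at (subst sg2 l2) p1 y = Some t) \/
  t = subst sg2 r2 \/ rstep (prime_cp R E1 E2) t (subst sg2 r2).
Proof.
  intros H2 Hincl [l1 [r1 [p [sg1 [H1 [Hs [Ht Hp]]]]]]].
  destruct (subt_at_subst_cases _ _ _ Hs) as [[p1 [p2 [x [-> [K1 K2]]]]]|[f [ts Hf]]].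
  - left. destruct (replace_at_defined _ _ (subst sg1 r1) K2) as [y Hy].
    exists p1, x, y. split; [auto|]. split; [exists l1, r1, p2, sg1; auto|].
    rewrite <- Ht. symmetry. eapply replace_at_app; [|exact Hy]. exact (subt_at_subst _ _ sg2 K1).
  - right. eapply prime_overlap_cp; eauto.
Qed.

Definition joinable_or_PCP (R : pairs F) t u : Prop :=
  joinable R t u \/ sym_step (PCP R) t u.

Definition joinable_B_or_PCPpm (B R : pairs F) t u : Prop :=
  joinable_B B R t u \/ sym_step (PCPpm R B) t u.

Lemma joinable_or_PCP_sym R t u : joinable_or_PCP R t u -> joinable_or_PCP R u t.
Proof. intros [H|H]; [left; apply joinable_sym | right; apply sym_step_sym]; auto. Qed.

Lemma joinable_or_PCP_ctx_closed R : ctx_closed (joinable_or_PCP R).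
Proof. apply ctx_closed_or; [apply joinable_ctx_closed | apply sym_step_ctx_closed]. Qed.

Lemma joinable_B_or_PCPpm_ctx_closed B R : ctx_closed (joinable_B_or_PCPpm B R).
Proof. apply ctx_closed_or; [apply joinable_B_ctx_closed | apply sym_step_ctx_closed]. Qed.

Lemma rsteps_subst_update E sg x y c : rstep E (sg x) y ->
  clos_refl_trans _ (rstep E) (subst sg c) (subst (sub_update sg x y) c).
Proof.
  intros H. apply subst_update_mono; [apply rt_refl | eapply rt_trans |
    apply clos_refl_trans_ctx_closed, rstep_ctx_closed | apply rt_step; auto].
Qed.

Lemma B_equiv_subst_update B sg x y c : rstep (Bpm B) (sg x) y ->
  B_equiv B (subst sg c) (subst (sub_update sg x y) c).
Proof.
  intros H. apply subst_update_mono; [apply rt_refl | eapply rt_trans |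
    apply B_equiv_ctx_closed | apply B_equiv_of_rstep_Bpm; auto].
Qed.

Lemma Bpm_vars_incl B l r : ES_B B -> Bpm B l r -> incl (vars r) (vars l).
Proof. intros HB [H|H] z Hz; apply (HB _ _ H z); auto. Qed.

Lemma prime_peak_R_R R l r sg t : TRS R -> left_linear R -> R l r ->
  prime_step R R (subst sg l) t -> joinable_or_PCP R t (subst sg r).
Proof.
  intros HT HL H Ht.
  destruct (prime_overlap_cases _ _ _ _ H (proj2 (HT _ _ H)) Ht)
    as [[p1 [x [y [K1 [K2 K3]]]]]|[->|K]].
  - left. rewrite (replace_at_var_linear _ _ _ _ (HL _ _ H) K1 K3).
    exists (subst (sub_update sg x y) r). split; [apply rt_step, rstep_root; auto|].
    apply rsteps_subst_update. assumption.
  - left. exists (subst sg r). split; apply rt_refl.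
  - right. left. exact K.
Qed.

Lemma prime_peak_R_Bpm B R l r sg u : TRS R -> left_linear R -> R l r ->
  prime_step R (Bpm B) (subst sg l) u -> joinable_B_or_PCPpm B R (subst sg r) u.
Proof.
  intros HT HL H Hu.
  destruct (prime_overlap_cases _ _ _ _ H (proj2 (HT _ _ H)) Hu)
    as [[p1 [x [y [K1 [K2 K3]]]]]|[->|K]].
  - left. rewrite (replace_at_var_linear _ _ _ _ (HL _ _ H) K1 K3).
    exists (subst sg r), (subst (sub_update sg x y) r). split; [apply rt_refl|].
    split; [apply B_equiv_subst_update; auto | apply rt_step, rstep_root; auto].
  - left. exists (subst sg r), (subst sg r). split; [|split]; apply rt_refl.
  - right. right. revert K. apply rstep_mono. unfold PCPpm. auto.
Qed.

(* No linearity is needed here: every occurrence of the variable is rewritten. *)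
Lemma prime_peak_Bpm_R B R l r sg t : ES_B B -> Bpm B l r ->
  prime_step R R (subst sg l) t -> joinable_B_or_PCPpm B R t (subst sg r).
Proof.
  intros HB H Ht.
  destruct (prime_overlap_cases _ _ _ _ H (Bpm_vars_incl HB H) Ht)
    as [[p1 [x [y [K1 [K2 K3]]]]]|[->|K]].
  - left. exists (subst (sub_update sg x y) l), (subst (sub_update sg x y) r).
    split; [|split].
    + eapply replace_at_var_subst_update; eauto using rt_refl, rt_trans, rt_step,
        clos_refl_trans_ctx_closed, rstep_ctx_closed.
    + apply B_equiv_of_rstep_Bpm, rstep_root. assumption.
    + apply rsteps_subst_update. assumption.
  - left. exists (subst sg r), (subst sg r). split; [|split]; apply rt_refl.
  - right. left. revert K. apply rstep_mono. unfold PCPpm. auto.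
Qed.

(* A non-prime redex contains a prime one strictly below its root; the peak between the two
   contractions lies inside the outer redex. *)
Lemma prime_step_or_prime_step_below R E (Conf : term F -> term F -> Prop) s u :
  (forall l r sg w, E l r -> prime_step R R (subst sg l) w -> Conf w (subst sg r)) ->
  ctx_closed Conf -> rstep E s u ->
  prime_step R E s u \/ exists v, prime_step R R s v /\ Conf v u.
Proof.
  intros Hroot HC [l1 [r1 [p [sg1 [H1 [Hs Hu]]]]]].
  destruct (classic (proper_subterms_NF R (subst sg1 l1))) as [Hp|Hp];
    [left; exists l1, r1, p, sg1; auto|right].
  destruct (redex_below_of_not_proper_subterms_NF Hp) as [Q [l3 [r3 [sg3 [HQ [HQs [H3 Hp3]]]]]]].
  destruct (replace_at_defined _ _ (subst sg3 r3) HQs) as [w Hw].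
  assert (HsQ : subt_at s (p ++ Q) = Some (subst sg3 l3)) by (rewrite subt_at_app, Hs; exact HQs).
  destruct (replace_at_defined _ _ (subst sg3 r3) HsQ) as [v Hv].
  exists v. split; [exists l3, r3, (p ++ Q), sg3; auto|].
  rewrite (replace_at_app _ _ _ _ Hs Hw) in Hv.
  eapply (ctx_closed_replace_at HC); [exact Hv | exact Hu |].
  apply (Hroot l1 r1 sg1 w H1). exists l3, r3, Q, sg3. auto.
Qed.

Lemma exists_prime_step_joinable R s t : TRS R -> left_linear R -> rstep R s t ->
  exists v, prime_step R R s v /\ joinable_or_PCP R t v.
Proof.
  intros HT HL Ht.
  assert (Hroot : forall l r sg w, R l r -> prime_step R R (subst sg l) w ->
                    joinable_or_PCP R w (subst sg r)) by (intros; eapply prime_peak_R_R; eauto).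
  destruct (prime_step_or_prime_step_below Hroot (@joinable_or_PCP_ctx_closed R) Ht)
    as [Hp|[v [Hv Hc]]].
  - exists t. split; [auto | left; exists t; split; apply rt_refl].
  - exists v. split; [auto | apply joinable_or_PCP_sym; auto].
Qed.

Lemma joinable_or_PCP_refl R t : joinable_or_PCP R t t.
Proof. left. exists t. split; apply rt_refl. Qed.

Lemma nabla_intro R s t u : rstep R s t -> rstep R s u -> joinable_or_PCP R t u -> nabla R s t u.
Proof.
  intros H1 H2 H3. split; [apply t_step; exact H1|].
  split; [apply t_step; exact H2 | exact H3].
Qed.

Lemma tnabla_intro B R s t u : rstep R s t -> rstep (Bpm B) s u ->
  joinable_B_or_PCPpm B R t u -> tnabla B R s t u.
Proof.
  intros H1 H2 H3. split; [apply t_step; exact H1|].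
  split; [apply B_equiv_of_rstep_Bpm; exact H2 | exact H3].
Qed.

Lemma nabla_sym R s t u : nabla R s t u -> nabla R s u t.
Proof. intros [H1 [H2 H3]]. split; [|split]; auto. apply joinable_or_PCP_sym. exact H3. Qed.

Lemma nabla_ctx R f ts i a b c : nth_error ts i = Some a -> nabla R a b c ->
  nabla R (Fun f ts) (Fun f (set_nth i ts b)) (Fun f (set_nth i ts c)).
Proof.
  intros Ha [H1 [H2 H3]]. split; [|split].
  - eapply clos_trans_ctx_closed; eauto using rstep_ctx_closed.
  - eapply clos_trans_ctx_closed; eauto using rstep_ctx_closed.
  - eapply (ctx_closed_set_nth (@joinable_or_PCP_ctx_closed R)); eauto.
Qed.

Lemma tnabla_ctx B R f ts i a b c : nth_error ts i = Some a -> tnabla B R a b c ->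
  tnabla B R (Fun f ts) (Fun f (set_nth i ts b)) (Fun f (set_nth i ts c)).
Proof.
  intros Ha [H1 [H2 H3]]. split; [|split].
  - eapply clos_trans_ctx_closed; eauto using rstep_ctx_closed.
  - eapply B_equiv_ctx_closed; eauto.
  - eapply (ctx_closed_set_nth (@joinable_B_or_PCPpm_ctx_closed B R)); eauto.
Qed.

Lemma parallel_steps_commute E1 E2 f ts i j a a' b b' : i <> j ->
  nth_error ts i = Some a -> nth_error ts j = Some b -> rstep E1 a a' -> rstep E2 b b' ->
  rstep E2 (Fun f (set_nth i ts a')) (Fun f (set_nth i (set_nth j ts b') a')) /\
  rstep E1 (Fun f (set_nth j ts b')) (Fun f (set_nth i (set_nth j ts b') a')).
Proof.
  intros Hij Ha Hb H1 H2.
  assert (Hi : i < length ts) by (eapply nth_error_Some_lt; eauto).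
  assert (Hj : j < length ts) by (eapply nth_error_Some_lt; eauto).
  split.
  - rewrite set_nth_comm by auto. apply rstep_ctx_closed with b; auto.
    rewrite nth_error_set_nth by auto. apply Nat.eqb_neq in Hij. rewrite Nat.eqb_sym, Hij. auto.
  - apply rstep_ctx_closed with a; auto.
    rewrite nth_error_set_nth by auto. apply Nat.eqb_neq in Hij. rewrite Hij. auto.
Qed.

Lemma peak_ind E1 E2 (P : term F -> term F -> term F -> Prop) :
  (forall l r sg u, E1 l r -> rstep E2 (subst sg l) u -> P (subst sg l) (subst sg r) u) ->
  (forall l r sg t, E2 l r -> rstep E1 (subst sg l) t -> P (subst sg l) t (subst sg r)) ->
  (forall f ts i a b c, nth_error ts i = Some a -> P a b c ->
     P (Fun f ts) (Fun f (set_nth i ts b)) (Fun f (set_nth i ts c))) ->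
  (forall f ts i j a a' b b', i <> j -> nth_error ts i = Some a -> nth_error ts j = Some b ->
     rstep E1 a a' -> rstep E2 b b' ->
     P (Fun f ts) (Fun f (set_nth i ts a')) (Fun f (set_nth j ts b'))) ->
  forall s t u, rstep E1 s t -> rstep E2 s u -> P s t u.
Proof.
  intros Hroot1 Hroot2 Hctx Hpar s.
  induction s as [x|f ts IH] using term_nested_ind; intros t u Ht Hu;
    destruct (rstep_cases Ht)
      as [[l [r [sg [Hl [Es ->]]]]]|[f1 [ts1 [i [a [a' [Es [Ha [Ha' ->]]]]]]]]];
    try (rewrite Es in *; apply Hroot1; assumption);
    destruct (rstep_cases Hu)
      as [[l [r [sg [Hl [Es' ->]]]]]|[f2 [ts2 [j [b [b' [Es' [Hb [Hb' ->]]]]]]]]];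
    try (rewrite Es' in *; apply Hroot2; assumption); try discriminate.
  rewrite Es in Es'. injection Es' as <- <-. injection Es as <- <-.
  destruct (Nat.eq_dec i j) as [<-|Hij]; [|eapply Hpar; eauto].
  rewrite Ha in Hb. injection Hb as <-. rewrite Forall_forall in IH.
  eapply Hctx; eauto using nth_error_In.
Qed.

Section Peaks.
Variables B R : pairs F.
Hypothesis HB : ES_B B.
Hypothesis HT : TRS R.
Hypothesis HL : left_linear R.

Lemma root_peak_R_R l r sg t : R l r -> rstep R (subst sg l) t ->
  exists v, nabla R (subst sg l) t v /\ nabla R (subst sg l) v (subst sg r).
Proof.
  intros H Ht. destruct (exists_prime_step_joinable HT HL Ht) as [v [Hv Hc]].
  apply rstep_of_prime_step in Hv as Hv'.
  exists v. split; apply nabla_intro; auto using rstep_root.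
  eapply prime_peak_R_R; eassumption.
Qed.

Lemma root_peak_Bpm_R l r sg t : Bpm B l r -> rstep R (subst sg l) t ->
  exists v, nabla R (subst sg l) t v /\ tnabla B R (subst sg l) v (subst sg r).
Proof.
  intros H Ht. destruct (exists_prime_step_joinable HT HL Ht) as [v [Hv Hc]].
  apply rstep_of_prime_step in Hv as Hv'.
  exists v. split; [apply nabla_intro | apply tnabla_intro]; auto using rstep_root.
  eapply prime_peak_Bpm_R; eassumption.
Qed.

Lemma root_peak_R_Bpm l r sg u : R l r -> rstep (Bpm B) (subst sg l) u ->
  exists v, nabla R (subst sg l) (subst sg r) v /\ tnabla B R (subst sg l) v u.
Proof.
  intros H Hu. assert (Hr : rstep R (subst sg l) (subst sg r)) by (apply rstep_root; auto).
  assert (Hroot : forall l r sg w, Bpm B l r -> prime_step R R (subst sg l) w ->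
                    joinable_B_or_PCPpm B R w (subst sg r))
    by (intros; eapply prime_peak_Bpm_R; eauto).
  destruct (prime_step_or_prime_step_below Hroot (@joinable_B_or_PCPpm_ctx_closed B R) Hu)
    as [Hp|[v [Hv Hc]]].
  - exists (subst sg r). split; [apply nabla_intro; auto using joinable_or_PCP_refl|].
    apply tnabla_intro; auto. eapply prime_peak_R_Bpm; eassumption.
  - apply rstep_of_prime_step in Hv as Hv'.
    exists v. split; [apply nabla_intro | apply tnabla_intro]; auto.
    apply joinable_or_PCP_sym. eapply prime_peak_R_R; eassumption.
Qed.

Lemma peak_R_R s t u : rstep R s t -> rstep R s u ->
  exists v, nabla R s t v /\ nabla R s v u.
Proof.
  revert s t u. apply peak_ind.
  - intros l r sg u H Hu. destruct (root_peak_R_R sg H Hu) as [v [H1 H2]].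
    exists v. split; apply nabla_sym; assumption.
  - intros l r sg t H Ht. apply root_peak_R_R; assumption.
  - intros f ts i a b c Ha [v [H1 H2]].
    exists (Fun f (set_nth i ts v)). split; apply nabla_ctx with a; assumption.
  - intros f ts i j a a' b b' Hij Ha Hb Ha' Hb'.
    destruct (parallel_steps_commute f ts Hij Ha Hb Ha' Hb') as [J1 J2].
    assert (Ht : rstep R (Fun f ts) (Fun f (set_nth i ts a'))) by (eapply rstep_ctx_closed; eauto).
    assert (Hu : rstep R (Fun f ts) (Fun f (set_nth j ts b'))) by (eapply rstep_ctx_closed; eauto).
    exists (Fun f (set_nth i ts a')). split; apply nabla_intro; auto using joinable_or_PCP_refl.
    left. eexists. split; apply rt_step; eassumption.
Qed.

Lemma peak_R_Bpm s t u : rstep R s t -> rstep (Bpm B) s u ->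
  exists v, nabla R s t v /\ tnabla B R s v u.
Proof.
  revert s t u. apply peak_ind.
  - intros l r sg u H Hu. apply root_peak_R_Bpm; assumption.
  - intros l r sg t H Ht. apply root_peak_Bpm_R; assumption.
  - intros f ts i a b c Ha [v [H1 H2]]. exists (Fun f (set_nth i ts v)).
    split; [apply nabla_ctx with a | apply tnabla_ctx with a]; assumption.
  - intros f ts i j a a' b b' Hij Ha Hb Ha' Hb'.
    destruct (parallel_steps_commute f ts Hij Ha Hb Ha' Hb') as [J1 J2].
    assert (Ht : rstep R (Fun f ts) (Fun f (set_nth i ts a'))) by (eapply rstep_ctx_closed; eauto).
    assert (Hu : rstep (Bpm B) (Fun f ts) (Fun f (set_nth j ts b')))
      by (eapply rstep_ctx_closed; eauto).
    exists (Fun f (set_nth i ts a')).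
    split; [apply nabla_intro | apply tnabla_intro]; auto using joinable_or_PCP_refl.
    left. eexists _, _. split; [apply rt_refl|].
    split; [apply B_equiv_of_rstep_Bpm; eassumption | apply rt_step; eassumption].
Qed.

End Peaks.

End Terms.

Theorem lemma3p15 (F : Type) (B R : pairs F) :
  ES_B B -> TRS R -> left_linear R ->
  (forall s t u : term F, rstep R s t -> rstep R s u ->
     exists v, nabla R s t v /\ nabla R s v u) /\
  (forall s t u : term F, rstep R s t -> sym_step B s u ->
     exists v, nabla R s t v /\ tnabla B R s v u).
Proof.
  intros HB HT HL. split.
  - exact (peak_R_R HT HL).
  - intros s t u Ht Hu. apply sym_step_iff_rstep_Bpm in Hu. exact (peak_R_Bpm HB HT HL Ht Hu).
Qed.
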